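(* Let $G$ be a finite nilpotent nested group. Then $G=P\times A$ where $P$ is a nested $p$-group for some prime $p$ and $A$ is abelian.
   Context: For $\chi\in\mathrm{Irr}(G)$, $Z(\chi)=\{g\in G: |\chi(g)|=\chi(1)\}$. A group $G$ is nested if for all $\chi,\psi\in\mathrm{Irr}(G)$ either $Z(\chi)\le Z(\psi)$ or $Z(\psi)\le Z(\chi)$. *)

From HB Require Import structures.
From mathcomp Require Import all_boot all_order all_algebra all_fingroup all_solvable all_field all_character.
Set Implicit Arguments. Unset Strict Implicit. Unset Printing Implicit Defensive.
Import GRing.Theory Num.Theory.
Local Open Scope ring_scope.

Definition nested (gT : finGroupType) (G : {group gT}) : Prop :=
  forall i j : Iirr G,
    ('Z('chi_i)%CF \subset 'Z('chi_j)%CF) \/ ('Z('chi_j)%CF \subset 'Z('chi_i)%CF).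

From HB Require Import structures.
From mathcomp Require Import all_boot all_order all_algebra all_fingroup all_solvable all_field all_character.

(* The proof rests on one computation about direct products G = K x H: the
   irreducible character chi_i x 1 of G inflated from chi_i in Irr(K) has
   center 'Z(chi_i) x H.  Two consequences follow:
   - nestedness passes from G to the direct factor K (the inflation maps
     Irr(K) into Irr(G) and preserves the order of the centers on K);
   - if G is nested, one of K, H is abelian: a nonabelian K has some chi_i
     whose center misses an element of K, likewise for H, and the two
     inflated characters would then have incomparable centers.
   For nilpotent G and any prime p, G = O_p(G) x O_p'(G).  If G is not
   abelian, take p dividing |G'|; then O_p(G) is not abelian (otherwise
   G' = O_p'(G)' would be a p'-group), so O_p'(G) is abelian and the
   theorem holds with P = O_p(G) and A = O_p'(G). *)

Set Implicit Arguments.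
Unset Strict Implicit.
Unset Printing Implicit Defensive.

Import GRing.Theory Num.Theory.
Local Open Scope ring_scope.

Section InflatedCenter.
Variables (gT : finGroupType) (G K H : {group gT}).
Hypothesis KxH : (K \x H)%g = G.

Lemma cfcenter_dprodl_Iirr_in (i : Iirr K) x : x \in K ->
  (x \in 'Z('chi_(dprodl_Iirr KxH i))%CF) = (x \in 'Z('chi_i)%CF).
Proof.
move=> Kx; have [sKG _] := mulG_sub (dprodW KxH).
rewrite irr_cfcenterE ?(subsetP sKG) // irr_cfcenterE // dprodl_IirrE.
by rewrite -{1}[x]mulg1 cfDprodEl // cfDprodl1.
Qed.

(* The complementary factor H lies in the center of every inflated
   character, since chi_i x 1 takes the value chi_i(1) on H. *)
Lemma dprodr_sub_cfcenter_dprodl_Iirr (i : Iirr K) :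
  H \subset 'Z('chi_(dprodl_Iirr KxH i))%CF.
Proof.
apply/subsetP=> y Hy; have [_ sHG] := mulG_sub (dprodW KxH).
rewrite irr_cfcenterE ?(subsetP sHG) // dprodl_IirrE.
rewrite -[y]mul1g cfDprodEl // cfDprodl1.
by rewrite ger0_norm ?char1_ge0 ?irr_char.
Qed.

Lemma nested_dprodl : nested G -> nested K.
Proof.
move=> nG i j.
have [sZ | sZ] := nG (dprodl_Iirr KxH i) (dprodl_Iirr KxH j); [left | right];
  apply/subsetP=> x Zx; have Kx := subsetP (cfcenter_sub _) x Zx;
  by rewrite -cfcenter_dprodl_Iirr_in // (subsetP sZ) ?cfcenter_dprodl_Iirr_in.
Qed.

End InflatedCenter.

(* A nonabelian group has an irreducible character whose center is proper,
   because the centers of all irreducible characters meet in 'Z(K). *)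
Lemma nonabelian_irr_cfcenter (gT : finGroupType) (K : {group gT}) :
  ~~ abelian K -> exists i : Iirr K, ~~ (K \subset 'Z('chi_i)%CF).
Proof.
move=> nabK; apply/existsP; apply: contraR nabK => /existsPn allZ.
apply/center_idP; rewrite -cap_cfcenter_irr; apply/eqP; rewrite eqEsubset.
rewrite (bigcap_min 0) ?cfcenter_sub //=; apply/bigcapsP=> i _.
by rewrite -[_ \subset _]negbK allZ.
Qed.

Lemma nested_dprod_abelian (gT : finGroupType) (G K H : {group gT}) :
  (K \x H)%g = G -> nested G -> abelian K || abelian H.
Proof.
move=> KxH nG; apply/norP=> [[nabK nabH]].
have HxK : (H \x K)%g = G by rewrite dprodC.
have [i /subsetPn[x Kx Zx]] := nonabelian_irr_cfcenter nabK.
have [j /subsetPn[y Hy Zy]] := nonabelian_irr_cfcenter nabH.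
have [/subsetP sZ | /subsetP sZ] := nG (dprodl_Iirr KxH i) (dprodl_Iirr HxK j).
- have := sZ y (subsetP (dprodr_sub_cfcenter_dprodl_Iirr KxH i) y Hy).
  by rewrite cfcenter_dprodl_Iirr_in // (negbTE Zy).
- have := sZ x (subsetP (dprodr_sub_cfcenter_dprodl_Iirr HxK j) x Kx).
  by rewrite cfcenter_dprodl_Iirr_in // (negbTE Zx).
Qed.

Local Open Scope group_scope.

(* In a nilpotent group with abelian Sylow p-subgroup, the derived subgroup
   is a p'-group: it equals the derived subgroup of the p'-part O_p'(G). *)
Lemma derived_pgroup_of_abelian_pcore (gT : finGroupType) (G : {group gT}) p :
  nilpotent G -> abelian 'O_p(G) -> p^'.-group G^`(1).
Proof.
move=> nilG /derG1P abP.
have := der_dprod 1 (nilpotent_pcoreC p nilG); rewrite abP dprod1g => <-.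
exact: pgroupS (der_sub 1 _) (pcore_pgroup _ _).
Qed.

Theorem mainTheorem12 (gT : finGroupType) (G : {group gT}) :
  nilpotent G -> nested G ->
  exists p : nat, exists P A : {group gT},
    [/\ prime p, p.-group P, nested P, abelian A & P \x A = G].
Proof.
move=> nilG nG.
have [abG | nabG] := boolP (abelian G).
  exists 2, 1%G, G; split; rewrite ?dprod1g ?pgroup1 //.
  by move=> i j; left; rewrite (subset_trans (cfcenter_sub _)) ?sub1G.
pose p := pdiv #|G^`(1)|.
have ntG' : (1 < #|G^`(1)|)%N by rewrite cardG_gt1; apply: contra nabG => /eqP/derG1P.
have pr_p : prime p := pdiv_prime ntG'.
have PxA := nilpotent_pcoreC p nilG.
have nabP : ~~ abelian 'O_p(G).
  apply: contraL (pdiv_dvd #|G^`(1)|) => /(derived_pgroup_of_abelian_pcore nilG).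
  by move/pgroupP=> p'G'; apply/negP=> /(p'G' p pr_p); rewrite !inE /= eqxx.
exists p, 'O_p(G)%G, 'O_p^'(G)%G; split; rewrite ?pcore_pgroup //.
- exact: nested_dprodl PxA nG.
- by have := nested_dprod_abelian PxA nG; rewrite (negbTE nabP).
Qed.
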